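(* Let $a:=f'(0)>0$ and let $x^*$ be the smallest positive root of $f$, or $x^*=\infty$ if $f(x)>0$ for all $x>0$. Define, for $x\in(0,x^* )$, $$G(x):=\int_0^x\Big(\frac1{f(u)}-\frac1{au}\Big)du+\frac1a\log x .$$ Then the integral is finite, $G$ is a continuous strictly increasing bijection from $(0,x^* )$ onto $\mathbb R$, and for every $x>0$ the limit $$H(x):=\lim_{t\to\infty}\phi_t\big(xe^{-at}\big)$$ exists, the convergence being uniform over $x$ in compact subsets of $(0,\infty)$, and $$H(x)=G^{-1}\Big(\tfrac1a\log x\Big).$$
   Context: $f:\mathbb R_+\to\mathbb R$ is twice continuously differentiable with bounded second derivative, $f(0)=0$, $a=f'(0)>0$, and $f$ satisfies $(y-x)(f(y)-f(x))\le a(y-x)^2$ for all $x,y\ge0$ (in particular $f(x)\le ax$ for $x\ge 0$). $\phi_t(x)$ denotes the flow of the ODE $\dot x_t=f(x_t)$, i.e. the value at time $t$ of the solution started at $x$. *)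

From Stdlib Require Import Reals Lra.
Open Scope R_scope.

(* (0, x^* ) : x^* is the smallest positive root of f (or +infinity).
   x lies in (0, x^* ) iff x > 0 and f has no root in (0, x]. *)
Definition below_xstar (f : R -> R) (x : R) : Prop :=
  0 < x /\ forall u, 0 < u <= x -> f u <> 0.

Definition improper_int0 (g : R -> R) (x I : R) : Prop :=
  forall eps, 0 < eps -> exists delta, 0 < delta /\
    forall e, 0 < e < delta ->
      exists pr : Riemann_integrable g e x, Rabs (RiemannInt pr - I) < eps.

(* phi is the (forward) flow of x' = f(x) on R_+ :
   phi t x is the value at time t >= 0 of the solution started at x >= 0. *)
Definition is_flow (f : R -> R) (phi : R -> R -> R) : Prop :=
  forall x, 0 <= x ->
    phi 0 x = x /\
    (forall eps, 0 < eps -> exists delta, 0 < delta /\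
       forall s, 0 <= s < delta -> Rabs (phi s x - x) < eps) /\
    (forall t, 0 < t -> derivable_pt_lim (fun s => phi s x) t (f (phi t x))).

From Stdlib Require Import Reals Lra Classical ClassicalEpsilon.
From Coquelicot Require Import Coquelicot.
Open Scope R_scope.

(* Since [G' = 1 / f], [G] turns the flow into a translation: [G (phi t y) = G y + t]
   for [y] in [(0, x^* )]; the trajectory cannot leave [(0, x^* )] because [G] blows up
   at [x^*] (linearly vanishing [f] when [x^*] is finite, [ln] when it is infinite).
   Writing [G = J + ln / a] with [J] the integral from [0] of the integrand, continuous
   on [[0, x^* )], gives [G (phi t (x e^(-a t))) = J (x e^(-a t)) + ln x / a], and
   [J (x e^(-a t)) -> J 0 = 0] uniformly for [x] in a compact set.  As [f u <= a u],
   [J] is nondecreasing, so [ln] is [a]-Lipschitz with respect to [G], which transfers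
   the convergence of [G]-values to [phi t (x e^(-a t)) -> G^-1 (ln x / a)]. *)

Lemma continuity_pt_iff_eps_delta (g : R -> R) x :
  continuity_pt g x <->
  forall eps, 0 < eps -> exists d, 0 < d /\
    forall y, Rabs (y - x) < d -> Rabs (g y - g x) < eps.
Proof.
  split; intros H eps Heps; destruct (H eps Heps) as [d [Hd Hy]];
    exists d; split; auto.
  - intros y Hyx. destruct (Req_dec y x) as [->|Hne].
    + unfold Rminus; rewrite Rplus_opp_r, Rabs_R0; auto.
    + apply (Hy y). split; [split; [exact I | auto] | exact Hyx].
  - intros y [_ Hy']. apply Hy. exact Hy'.
Qed.

Definition glue (c : R) (h : R -> R) (u : R) : R :=
  if Rle_dec u 0 then c else h u.

Lemma glue_continuity (c : R) (h : R -> R) :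
  (forall z, 0 < z -> continuity_pt h z) ->
  (forall eps, 0 < eps -> exists d, 0 < d /\
     forall u, 0 < u < d -> Rabs (h u - c) < eps) ->
  continuity (glue c h).
Proof.
  intros Hpos Hlim z. destruct (Rtotal_order z 0) as [Hz|[->|Hz]].
  - apply continuity_pt_locally_ext with (a := - z) (f := fun _ => c);
      [lra | | apply continuity_pt_const; intros ? ?; auto].
    intros y Hy. unfold glue. apply Rabs_def2 in Hy.
    destruct (Rle_dec y 0); lra.
  - apply continuity_pt_iff_eps_delta. intros eps Heps.
    destruct (Hlim eps Heps) as [d [Hd Hu]]. exists d; split; auto.
    intros y Hy. rewrite Rminus_0_r in Hy. unfold glue.
    destruct (Rle_dec 0 0); [|lra]. destruct (Rle_dec y 0).
    + unfold Rminus; rewrite Rplus_opp_r, Rabs_R0; auto.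
    + apply Hu. apply Rabs_def2 in Hy. lra.
  - apply continuity_pt_locally_ext with (a := z) (f := h); [lra | | auto].
    intros y Hy. unfold glue. apply Rabs_def2 in Hy.
    destruct (Rle_dec y 0); [lra | auto].
Qed.

Lemma const_of_derive0_right_cont (h : R -> R) a b : a < b ->
  (forall eps, 0 < eps -> exists d, 0 < d /\
     forall s, a <= s < a + d -> Rabs (h s - h a) < eps) ->
  (forall x, a < x < b -> derivable_pt_lim h x 0) ->
  forall x, a < x < b -> h x = h a.
Proof.
  intros Hab Hc Hd x Hx. apply cond_eq. intros eps Heps.
  destruct (Hc eps Heps) as [d [Hd0 Hs]].
  set (s := a + Rmin d (x - a) / 2).
  assert (Hm1 : Rmin d (x - a) <= d) by apply Rmin_l.
  assert (Hm2 : Rmin d (x - a) <= x - a) by apply Rmin_r.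
  assert (Hm0 : 0 < Rmin d (x - a)) by (apply Rmin_glb_lt; lra).
  destruct (MVT_cor2 h (fun _ => 0) s x) as [c [Hhx _]]; [unfold s; lra| |].
  { intros c Hc0. apply Hd. unfold s in *; lra. }
  replace (h x - h a) with (h s - h a) by lra. apply Hs. unfold s; lra.
Qed.

Lemma real_induction (P : R -> Prop) : P 0 ->
  (forall T, 0 < T -> (forall t, 0 <= t < T -> P t) -> P T) ->
  (forall T, 0 <= T -> (forall t, 0 <= t <= T -> P t) ->
     exists d, 0 < d /\ forall t, T < t < T + d -> P t) ->
  forall t, 0 <= t -> P t.
Proof.
  intros P0 Hclosed Hopen t0 Ht0. apply NNPP. intro NP.
  set (E := fun T => 0 <= T /\ forall t, 0 <= t <= T -> P t).
  assert (Eb : bound E).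
  { exists t0. intros T [HT HP]. destruct (Rle_lt_dec T t0); auto.
    exfalso. apply NP, HP. lra. }
  assert (E0 : E 0).
  { split; [lra|]. intros t Ht. replace t with 0 by lra. auto. }
  destruct (completeness E Eb (ex_intro _ 0 E0)) as [S [Hub Hlub]].
  assert (HS0 : 0 <= S) by (apply Hub; auto).
  assert (Hbelow : forall t, 0 <= t < S -> P t).
  { intros t Ht. apply NNPP. intro Nt. assert (S <= t); [|lra].
    apply Hlub. intros T [HT HP]. destruct (Rle_lt_dec T t); auto.
    exfalso. apply Nt, HP. lra. }
  assert (ES : forall t, 0 <= t <= S -> P t).
  { intros t [Ht HtS]. destruct (Rle_lt_or_eq_dec _ _ HtS) as [Hl| ->].
    - apply Hbelow; lra.
    - destruct (Rle_lt_or_eq_dec _ _ HS0) as [Hp| <-]; auto. }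
  destruct (Hopen S HS0 ES) as [d [Hd Hd']].
  assert (ESd : E (S + d / 2)).
  { split; [lra|]. intros t Ht.
    destruct (Rle_lt_dec t S); [apply ES; lra | apply Hd'; lra]. }
  pose proof (Hub _ ESd). lra.
Qed.

Lemma abs_sub_lt_of_ln_close p r q eps : 0 < p -> 0 < r <= q -> 0 < eps ->
  Rabs (ln p - ln r) < ln (1 + eps / q) -> Rabs (p - r) < eps.
Proof.
  intros Hp Hr Heps Hln.
  assert (Hu : 0 < eps / q) by (apply Rdiv_lt_0_compat; lra).
  assert (Hrq : r * (eps / q) <= eps).
  { replace eps with (q * (eps / q)) at 2 by (field; lra).
    apply Rmult_le_compat_r; lra. }
  apply Rabs_def2 in Hln. destruct Hln as [Hup Hlow].
  destruct (Rle_lt_dec r p) as [Hrp|Hpr].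
  - assert (p < r * (1 + eps / q)).
    { apply ln_lt_inv; [lra | apply Rmult_lt_0_compat; lra |].
      rewrite ln_mult by lra. lra. }
    rewrite Rabs_right by lra. lra.
  - assert (r < p * (1 + eps / q)).
    { apply ln_lt_inv; [lra | apply Rmult_lt_0_compat; lra |].
      rewrite ln_mult by lra. lra. }
    assert (p * (eps / q) <= r * (eps / q)) by (apply Rmult_le_compat_r; lra).
    rewrite Rabs_left by lra. lra.
Qed.

Lemma exp_decay_uniform a d del : 0 < a -> 0 < del -> exists T, forall t, T <= t ->
  forall x, 0 < x <= d -> 0 < x * exp (- a * t) < del.
Proof.
  intros Ha Hdel. exists ((ln (d + 1) - ln del) / a). intros t Ht x Hx.
  pose proof (exp_pos (- a * t)).
  assert (Hat : ln (d + 1) - ln del <= a * t).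
  { apply Rmult_le_compat_l with (r := a) in Ht; [|lra].
    replace (a * ((ln (d + 1) - ln del) / a)) with (ln (d + 1) - ln del) in Ht
      by (field; lra). exact Ht. }
  assert (Hy0 : 0 < x * exp (- a * t)) by (apply Rmult_lt_0_compat; lra).
  split; auto. apply ln_lt_inv; auto.
  rewrite ln_mult, ln_exp by lra.
  assert (ln x < ln (d + 1)) by (apply ln_increasing; lra). lra.
Qed.

Lemma below_xstar_le (f : R -> R) x y :
  below_xstar f x -> 0 < y <= x -> below_xstar f y.
Proof. intros [Hx Hr] Hy. split; [lra|]. intros u Hu. apply Hr. lra. Qed.

Section Proposition1.

Variables f f1 f2 : R -> R.
Hypothesis f_derive : forall x, derivable_pt_lim f x (f1 x).
Hypothesis f1_derive : forall x, derivable_pt_lim f1 x (f2 x).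
Hypothesis f2_continuous : continuity f2.
Hypothesis f2_bounded : exists M, forall x, 0 <= x -> Rabs (f2 x) <= M.
Hypothesis f_0 : f 0 = 0.
Hypothesis a_pos : 0 < f1 0.
Hypothesis f_one_sided_lipschitz : forall x y, 0 <= x -> 0 <= y ->
  (y - x) * (f y - f x) <= f1 0 * (y - x) ^ 2.

Local Notation a := (f1 0).
Local Notation D := (below_xstar f).

Lemma f_continuous : continuity f.
Proof. intros x. apply derivable_continuous_pt. exists (f1 x). apply f_derive. Qed.

Lemma f_le_linear y : 0 < y -> f y <= a * y.
Proof.
  intros Hy. pose proof (f_one_sided_lipschitz 0 y (Rle_refl 0) (Rlt_le _ _ Hy)) as Hm.
  rewrite f_0 in Hm. apply Rmult_le_reg_l with y; auto. nra.
Qed.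

Lemma f_gt_half_linear_near_0 :
  exists d, 0 < d /\ forall u, 0 < u < d -> a / 2 * u < f u.
Proof.
  destruct (f_derive 0 (a / 2)) as [d Hd]; [lra|].
  exists d. split; [apply cond_pos|].
  intros u [Hu1 Hu2]. specialize (Hd u).
  rewrite Rplus_0_l, f_0, Rminus_0_r in Hd.
  assert (Habs : Rabs u < d) by (rewrite Rabs_right; lra).
  specialize (Hd ltac:(lra) Habs). apply Rabs_def2 in Hd.
  assert (Hq : a / 2 < f u / u) by lra.
  apply (Rmult_lt_compat_r u) in Hq; auto.
  unfold Rdiv in Hq at 2. rewrite Rmult_assoc, Rinv_l, Rmult_1_r in Hq; lra.
Qed.

Lemma below_xstar_near_0 : exists d, 0 < d /\ forall u, 0 < u < d -> D u.
Proof.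
  destruct f_gt_half_linear_near_0 as [d [Hd Hu]].
  exists d; split; auto. intros u Hu'. split; [lra|].
  intros v Hv. specialize (Hu v ltac:(lra)).
  assert (0 < a / 2 * v) by (apply Rmult_lt_0_compat; lra). lra.
Qed.

(* [f] is positive near [0+] and has no zero on [(0, x]], so by the IVT it stays positive. *)
Lemma f_pos x : D x -> 0 < f x.
Proof.
  intros [Hx Hr]. destruct f_gt_half_linear_near_0 as [d [Hd Hu]].
  set (u0 := Rmin x (d / 2)).
  assert (Hu0 : 0 < u0 <= x) by (unfold u0; split; [apply Rmin_glb_lt; lra | apply Rmin_l]).
  assert (Hfu0 : 0 < f u0).
  { assert (Hu0d : u0 <= d / 2) by apply Rmin_r.
    specialize (Hu u0 ltac:(lra)).
    assert (0 < a / 2 * u0) by (apply Rmult_lt_0_compat; lra). lra. }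
  destruct (Rlt_le_dec 0 (f x)) as [|Hn]; auto. exfalso.
  destruct (Rle_lt_or_eq_dec _ _ Hn) as [Hneg|Hz]; [|apply (Hr x); lra].
  destruct (Rle_lt_or_eq_dec _ _ (proj2 Hu0)) as [Hlt|Heq]; [|rewrite Heq in Hfu0; lra].
  destruct (Ranalysis5.IVT_interv (fun u => - f u) u0 x) as [z [Hz1 Hz2]];
    [intros ? _; apply continuity_pt_opp, f_continuous | exact Hlt | lra | lra |].
  apply (Hr z); lra.
Qed.

Lemma below_xstar_extend x : D x -> exists e, 0 < e /\ D (x + e).
Proof.
  intros Dx. pose proof (f_pos x Dx) as Hfx.
  destruct (proj1 (continuity_pt_iff_eps_delta _ _) (f_continuous x) (f x) Hfx)
    as [d [Hd Hy]].
  exists (d / 2). split; [lra|]. destruct Dx as [Hx0 Hr]. split; [lra|].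
  intros u Hu. destruct (Rle_lt_dec u x); [apply Hr; lra|].
  assert (Hux : Rabs (u - x) < d) by (rewrite Rabs_right; lra).
  specialize (Hy u Hux). apply Rabs_def2 in Hy. lra.
Qed.

Lemma f_taylor_order2 u : 0 < u ->
  exists z, 0 < z < u /\ f u - a * u = f2 z * (u * u) / 2.
Proof.
  intros Hu. set (C := (f u - a * u) / (u * u)).
  assert (Df : forall t, Derive f t = f1 t)
    by (intros t; apply is_derive_unique, is_derive_Reals, f_derive).
  assert (Df1 : forall t, Derive f1 t = f2 t)
    by (intros t; apply is_derive_unique, is_derive_Reals, f1_derive).
  destruct (MVT_cor2 (fun t => f t - a * t - C * (t * t))
              (fun t => f1 t - a - 2 * C * t) 0 u Hu) as [xi [Hxi1 Hxi2]].
  { intros c _. apply is_derive_Reals. auto_derive.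
    - exists (f1 c). apply is_derive_Reals, f_derive.
    - rewrite Df. ring. }
  rewrite f_0 in Hxi1.
  assert (Hend : f u - a * u - C * (u * u) = 0) by (unfold C; field; lra).
  assert (Hxi : f1 xi - a - 2 * C * xi = 0).
  { assert (Hp : (f1 xi - a - 2 * C * xi) * u = 0) by (rewrite Hend in Hxi1; lra).
    apply Rmult_integral in Hp. destruct Hp; lra. }
  destruct (MVT_cor2 (fun t => f1 t - a - 2 * C * t) (fun t => f2 t - 2 * C)
              0 xi (proj1 Hxi2)) as [z [Hz1 Hz2]].
  { intros c _. apply is_derive_Reals. auto_derive.
    - exists (f2 c). apply is_derive_Reals, f1_derive.
    - rewrite Df1. ring. }
  exists z. split; [lra|].
  assert (Hz : f2 z - 2 * C = 0).
  { assert (Hp : (f2 z - 2 * C) * xi = 0) by (rewrite Hxi in Hz1; lra).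
    apply Rmult_integral in Hp. destruct Hp; lra. }
  replace (f u - a * u) with (C * (u * u)) by (unfold C; field; lra).
  replace C with (f2 z / 2) by lra. field.
Qed.

Definition chord_slope : R -> R := glue a (fun u => f u / u).
Definition taylor_rem : R -> R := glue (f2 0 / 2) (fun u => (f u - a * u) / (u * u)).

(* The continuous extension to [u <= 0] of [1 / f u - 1 / (a u)]; its value at [0]
   is [- f''(0) / (2 a^2)]. *)
Definition integrand (u : R) : R := - taylor_rem u / (a * chord_slope u).

Lemma chord_slope_continuous : continuity chord_slope.
Proof.
  apply glue_continuity.
  - intros z Hz. apply continuity_pt_div;
      [apply f_continuous | apply derivable_continuous_pt, derivable_pt_id | lra].
  - intros eps Heps. destruct (f_derive 0 eps Heps) as [d Hd].
    exists d. split; [apply cond_pos|]. intros u Hu.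
    specialize (Hd u ltac:(lra) ltac:(rewrite Rabs_right; lra)).
    rewrite Rplus_0_l, f_0, Rminus_0_r in Hd. exact Hd.
Qed.

Lemma taylor_rem_continuous : continuity taylor_rem.
Proof.
  apply glue_continuity.
  - intros z Hz. apply continuity_pt_div.
    + apply continuity_pt_minus; [apply f_continuous|].
      apply continuity_pt_mult;
        [apply continuity_pt_const; intros ? ?; auto | apply derivable_continuous_pt, derivable_pt_id].
    + apply continuity_pt_mult; apply derivable_continuous_pt, derivable_pt_id.
    + intro Hc. apply Rmult_integral in Hc. lra.
  - intros eps Heps.
    destruct (proj1 (continuity_pt_iff_eps_delta _ _) (f2_continuous 0) (2 * eps))
      as [d [Hd Hy]]; [lra|].
    exists d. split; auto. intros u Hu.
    destruct (f_taylor_order2 u ltac:(lra)) as [z [Hz Hfz]]. rewrite Hfz.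
    replace (f2 z * (u * u) / 2 / (u * u) - f2 0 / 2) with ((f2 z - f2 0) / 2)
      by (field; lra).
    specialize (Hy z ltac:(rewrite Rminus_0_r, Rabs_right; lra)).
    unfold Rdiv. rewrite Rabs_mult, (Rabs_right (/ 2)) by lra. lra.
Qed.

Local Notation lt_xstar z := (0 < z -> D z).

Lemma lt_xstar_between x y z : lt_xstar x -> lt_xstar y -> x <= z <= y -> lt_xstar z.
Proof. intros _ Hy Hz Hz0. apply below_xstar_le with y; [apply Hy|]; lra. Qed.

Lemma lt_xstar_open z : lt_xstar z ->
  exists e, 0 < e /\ forall w, Rabs (w - z) < e -> lt_xstar w.
Proof.
  intros Hz. destruct (Rle_lt_dec z 0) as [Hn|Hp].
  - destruct below_xstar_near_0 as [d [Hd Hu]].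
    exists (d / 2 - z). split; [lra|]. intros w Hw Hw0. apply Rabs_def2 in Hw.
    apply Hu. lra.
  - destruct (below_xstar_extend z (Hz Hp)) as [e [He De]].
    exists (Rmin e z). split; [apply Rmin_glb_lt; lra|]. intros w Hw Hw0.
    apply Rabs_def2 in Hw. pose proof (Rmin_l e z).
    apply below_xstar_le with (z + e); auto. lra.
Qed.

Lemma integrand_continuous z : lt_xstar z -> continuity_pt integrand z.
Proof.
  intros Hz.
  assert (Hslope : chord_slope z <> 0).
  { unfold chord_slope, glue. destruct (Rle_dec z 0); [lra|].
    pose proof (f_pos z (Hz ltac:(lra))).
    assert (0 < f z / z) by (apply Rdiv_lt_0_compat; lra). lra. }
  apply continuity_pt_div.
  - apply continuity_pt_opp, taylor_rem_continuous.
  - apply continuity_pt_mult;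
      [apply continuity_pt_const; intros ? ?; auto | apply chord_slope_continuous].
  - intro Hc. apply Rmult_integral in Hc. lra.
Qed.

Lemma integrand_eq u : 0 < u -> f u <> 0 -> integrand u = 1 / f u - 1 / (a * u).
Proof.
  intros Hu Hf. unfold integrand, taylor_rem, chord_slope, glue.
  destruct (Rle_dec u 0); [lra|]. field. repeat split; lra.
Qed.

Lemma integrand_nonneg u : D u -> 0 <= integrand u.
Proof.
  intros Du. pose proof (f_pos u Du). pose proof (proj1 Du).
  pose proof (f_le_linear u (proj1 Du)).
  rewrite integrand_eq by lra.
  assert (1 / (a * u) <= 1 / f u); [|lra].
  apply Rmult_le_reg_l with (f u * (a * u)); [apply Rmult_lt_0_compat; nra|].
  field_simplify; lra.
Qed.

Lemma ex_RInt_integrand u v : lt_xstar u -> lt_xstar v -> ex_RInt integrand u v.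
Proof.
  intros Hu Hv. apply (@ex_RInt_continuous R_CompleteNormedModule). intros z Hz.
  apply continuity_pt_filterlim, integrand_continuous.
  destruct (Rle_dec u v).
  - rewrite Rmin_left, Rmax_right in Hz by lra. apply lt_xstar_between with u v; auto.
  - rewrite Rmin_right, Rmax_left in Hz by lra. apply lt_xstar_between with v u; auto.
Qed.

Definition J (x : R) : R := RInt integrand 0 x.

Definition G (x : R) : R := J x + ln x / a.

Lemma J_derive z : lt_xstar z -> derivable_pt_lim J z (integrand z).
Proof.
  intros Hz. apply is_derive_Reals.
  apply (is_derive_RInt (V := R_CompleteNormedModule) _ _ 0).
  - destruct (lt_xstar_open z Hz) as [e [He Hw]].
    exists (mkposreal e He). intros y Hy. apply RInt_correct.
    apply ex_RInt_integrand; [intro; lra | apply Hw, Hy].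
  - apply continuity_pt_filterlim, integrand_continuous, Hz.
Qed.

Lemma J_nondecreasing x y : D x -> D y -> x <= y -> J x <= J y.
Proof.
  intros Dx Dy Hxy. destruct (Rle_lt_or_eq_dec _ _ Hxy) as [Hlt| ->]; [|lra].
  pose proof (proj1 Dx).
  destruct (MVT_cor2 J integrand x y Hlt) as [c [Hc1 Hc2]].
  { intros c Hc. apply J_derive. intros _. apply below_xstar_le with y; auto. lra. }
  assert (Dc : D c) by (apply below_xstar_le with y; auto; lra).
  pose proof (integrand_nonneg c Dc). nra.
Qed.

Lemma J_vanishes_at_0 eps : 0 < eps -> exists d, 0 < d /\
  forall e, 0 < e < d -> D e /\ Rabs (J e) < eps.
Proof.
  intros Heps.
  assert (HJ : continuity_pt J 0).
  { apply derivable_continuous_pt. exists (integrand 0). apply J_derive. intro; lra. }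
  destruct (proj1 (continuity_pt_iff_eps_delta _ _) HJ eps Heps) as [d1 [Hd1 Hy]].
  destruct below_xstar_near_0 as [d2 [Hd2 Hu]].
  exists (Rmin d1 d2). split; [apply Rmin_glb_lt; auto|]. intros e He.
  pose proof (Rmin_l d1 d2). pose proof (Rmin_r d1 d2). split; [apply Hu; lra|].
  replace (J e) with (J e - J 0) by (unfold J; rewrite RInt_point; apply Rminus_0_r).
  apply Hy. rewrite Rminus_0_r, Rabs_right; lra.
Qed.

Lemma G_improper_integral x : D x ->
  improper_int0 (fun u => 1 / f u - 1 / (a * u)) x (G x - ln x / a).
Proof.
  intros Dx eps Heps. destruct (J_vanishes_at_0 eps Heps) as [d [Hd Hs]].
  pose proof (proj1 Dx).
  exists (Rmin d x). split; [apply Rmin_glb_lt; auto|]. intros e He.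
  pose proof (Rmin_l d x). pose proof (Rmin_r d x).
  destruct (Hs e ltac:(lra)) as [De Je].
  assert (Eq : forall u, Rmin e x < u < Rmax e x ->
            integrand u = 1 / f u - 1 / (a * u)).
  { intros u Hu. rewrite Rmin_left, Rmax_right in Hu by lra.
    apply integrand_eq; [lra|]. apply Rgt_not_eq, f_pos, below_xstar_le with x; auto; lra. }
  assert (Iex : ex_RInt integrand e x) by (apply ex_RInt_integrand; auto).
  exists (ex_RInt_Reals_0 _ _ _ (ex_RInt_ext _ _ _ _ Eq Iex)).
  rewrite <- RInt_Reals, <- (RInt_ext _ _ _ _ Eq).
  assert (I0 : ex_RInt integrand 0 e) by (apply ex_RInt_integrand; auto; intro; lra).
  pose proof (RInt_Chasles integrand 0 e x I0 Iex) as Hchasles.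
  unfold plus in Hchasles; simpl in Hchasles.
  unfold G, J in *.
  replace (RInt integrand e x - (RInt integrand 0 x + ln x / a - ln x / a))
    with (- RInt integrand 0 e) by lra.
  rewrite Rabs_Ropp. exact Je.
Qed.

Lemma G_derive x : D x -> derivable_pt_lim G x (1 / f x).
Proof.
  intros Dx. pose proof (f_pos x Dx). pose proof (proj1 Dx).
  replace (1 / f x) with (integrand x + / x / a)
    by (rewrite integrand_eq by lra; field; lra).
  apply (derivable_pt_lim_plus J (fun x => ln x / a)).
  - apply J_derive. intros _; exact Dx.
  - apply is_derive_Reals. auto_derive; [lra | field; lra].
Qed.

Lemma G_continuous x : D x -> continuity_pt G x.
Proof. intros Dx. apply derivable_continuous_pt. exists (1 / f x). apply G_derive, Dx. Qed.

Lemma G_increasing x y : D x -> D y -> x < y -> G x < G y.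
Proof.
  intros Dx Dy Hxy. pose proof (proj1 Dx).
  destruct (MVT_cor2 G (fun u => 1 / f u) x y Hxy) as [c [Hc1 Hc2]].
  { intros c Hc. apply G_derive, below_xstar_le with y; auto. lra. }
  assert (Dc : D c) by (apply below_xstar_le with y; auto; lra).
  pose proof (f_pos c Dc).
  assert (0 < 1 / f c) by (apply Rdiv_lt_0_compat; lra). nra.
Qed.

Lemma ln_dist_le_G_dist u v : D u -> D v -> Rabs (ln u - ln v) <= a * Rabs (G u - G v).
Proof.
  assert (Hle : forall u v, D u -> D v -> u <= v ->
            0 <= ln v - ln u <= a * (G v - G u)).
  { intros x y Dx Dy Hxy. pose proof (J_nondecreasing x y Dx Dy Hxy).
    pose proof (proj1 Dx).
    assert (ln x <= ln y) by (apply ln_le; lra).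
    unfold G. replace (a * (J y + ln y / a - (J x + ln x / a)))
      with (a * (J y - J x) + (ln y - ln x)) by (field; lra).
    nra. }
  intros Du Dv. destruct (Rle_dec u v) as [Huv|Hvu].
  - destruct (Hle u v Du Dv Huv). assert (0 <= G v - G u) by nra.
    rewrite (Rabs_minus_sym (ln u)), (Rabs_minus_sym (G u)), !Rabs_right; lra.
  - destruct (Hle v u Dv Du ltac:(lra)). assert (0 <= G u - G v) by nra.
    rewrite !Rabs_right; lra.
Qed.

Lemma G_unbounded_below z : exists x, D x /\ G x < z.
Proof.
  destruct (J_vanishes_at_0 1 Rlt_0_1) as [d [Hd Hs]].
  set (w := exp (a * (z - 1))). assert (0 < w) by apply exp_pos.
  set (x := Rmin (d / 2) (w / 2)).
  assert (x <= d / 2) by apply Rmin_l. assert (x <= w / 2) by apply Rmin_r.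
  assert (Hx : 0 < x) by (apply Rmin_glb_lt; lra).
  destruct (Hs x ltac:(lra)) as [Dx Jx]. exists x. split; auto.
  assert (ln x < a * (z - 1)).
  { rewrite <- (ln_exp (a * (z - 1))). apply ln_increasing; auto. fold w. lra. }
  assert (ln x / a < z - 1).
  { apply Rmult_lt_reg_r with a; auto. unfold Rdiv. rewrite Rmult_assoc, Rinv_l by lra. lra. }
  apply Rabs_def2 in Jx. unfold G. lra.
Qed.

Lemma G_unbounded_above_xstar_infinite : (forall x, 0 < x -> D x) ->
  forall z, exists x, D x /\ z < G x.
Proof.
  intros All z. assert (D1 : D 1) by (apply All; lra).
  set (w := exp (a * (z - J 1))). assert (0 < w) by apply exp_pos.
  exists (Rmax 1 (w + 1)). pose proof (Rmax_l 1 (w + 1)). pose proof (Rmax_r 1 (w + 1)).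
  assert (Dx : D (Rmax 1 (w + 1))) by (apply All; lra). split; auto.
  pose proof (J_nondecreasing 1 _ D1 Dx ltac:(lra)).
  assert (a * (z - J 1) < ln (Rmax 1 (w + 1))).
  { rewrite <- (ln_exp (a * (z - J 1))). apply ln_increasing; auto. fold w. lra. }
  assert (z - J 1 < ln (Rmax 1 (w + 1)) / a).
  { apply Rmult_lt_reg_r with a; auto. unfold Rdiv. rewrite Rmult_assoc, Rinv_l by lra. lra. }
  unfold G. lra.
Qed.

Lemma xstar_finite x0 : 0 < x0 -> ~ D x0 ->
  exists s, 0 < s /\ (forall y, 0 < y < s -> D y) /\ f s <= 0.
Proof.
  intros Hx0 NDx0. destruct below_xstar_near_0 as [d [Hd Hnear]].
  assert (Eb : bound D).
  { exists x0. intros y Dy. destruct (Rle_lt_dec y x0); auto. exfalso. apply NDx0.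
    apply below_xstar_le with y; auto; lra. }
  assert (Dd : D (d / 2)) by (apply Hnear; lra).
  destruct (completeness D Eb (ex_intro _ _ Dd)) as [s [Hub Hlub]].
  assert (Hs : 0 < s) by (pose proof (Hub _ Dd); lra).
  assert (Hin : forall y, 0 < y < s -> D y).
  { intros y Hy. apply NNPP. intro Ny. assert (s <= y); [|lra].
    apply Hlub. intros w Dw. destruct (Rle_lt_dec w y); auto. exfalso. apply Ny.
    apply below_xstar_le with w; auto; lra. }
  exists s. split; [|split]; auto.
  destruct (Rle_lt_dec (f s) 0) as [|Hp]; auto. exfalso.
  assert (Ds : D s).
  { split; auto. intros u [Hu Hus]. destruct (Rle_lt_or_eq_dec _ _ Hus) as [Hl| ->].
    - apply Rgt_not_eq, f_pos, Hin. lra.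
    - lra. }
  destruct (below_xstar_extend s Ds) as [e [He De]]. pose proof (Hub _ De). lra.
Qed.

Lemma f1_ge_linear M : (forall x, 0 <= x -> Rabs (f2 x) <= M) ->
  forall x, 0 <= x -> a - M * x <= f1 x.
Proof.
  intros HM x Hx. destruct (Rle_lt_or_eq_dec _ _ Hx) as [Hp| <-].
  - destruct (MVT_cor2 f1 f2 0 x Hp) as [c [Hc1 Hc2]]; [intros c _; apply f1_derive|].
    specialize (HM c ltac:(lra)). apply Rabs_le_between in HM. nra.
  - specialize (HM 0 (Rle_refl 0)). pose proof (Rabs_pos (f2 0)). lra.
Qed.

(* Bounded [f''] makes [f] Lipschitz on [[0, s]], so [f] vanishes at most linearly at [s]. *)
Lemma f_le_linear_left_of_root s : 0 < s -> f s <= 0 ->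
  exists K, 0 < K /\ forall u, 0 <= u < s -> f u <= K * (s - u).
Proof.
  intros Hs Hfs. destruct f2_bounded as [M HM].
  assert (HM0 : 0 <= M) by (pose proof (HM 0 (Rle_refl 0)); pose proof (Rabs_pos (f2 0)); lra).
  exists (M * s + 1). split; [nra|]. intros u Hu.
  destruct (MVT_cor2 f f1 u s (proj2 Hu)) as [c [Hc1 Hc2]]; [intros c _; apply f_derive|].
  pose proof (f1_ge_linear M HM c ltac:(lra)).
  assert (M * c <= M * s) by (apply Rmult_le_compat_l; lra).
  nra.
Qed.

(* [G u + ln (s - u) / K] has derivative [1 / f u - 1 / (K (s - u)) >= 0], and
   [ln (s - u) / K] tends to [-oo] as [u -> s]. *)
Lemma G_unbounded_above_xstar_finite s K : 0 < s -> (forall y, 0 < y < s -> D y) ->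
  0 < K -> (forall u, 0 <= u < s -> f u <= K * (s - u)) ->
  forall z, exists x, D x /\ z < G x.
Proof.
  intros Hs Hin HK Hfu z.
  set (h := fun u => G u + ln (s - u) / K).
  assert (Hh : forall x, s / 2 <= x < s -> h (s / 2) <= h x).
  { intros x Hx. destruct (Rle_lt_or_eq_dec _ _ (proj1 Hx)) as [Hl| <-]; [|lra].
    destruct (MVT_cor2 h (fun u => 1 / f u - 1 / (K * (s - u))) (s / 2) x Hl)
      as [c [Hc1 Hc2]].
    { intros c Hc. apply (derivable_pt_lim_plus G (fun u => ln (s - u) / K)).
      - apply G_derive, Hin. lra.
      - apply is_derive_Reals. auto_derive; [lra | field; lra]. }
    pose proof (f_pos c (Hin c ltac:(lra))). pose proof (Hfu c ltac:(lra)).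
    assert (1 / (K * (s - c)) <= 1 / f c); [|nra].
    apply Rmult_le_reg_l with (f c * (K * (s - c))); [apply Rmult_lt_0_compat; nra|].
    field_simplify; lra. }
  set (w := exp (K * (h (s / 2) - z))). assert (0 < w) by apply exp_pos.
  set (del := Rmin (s / 4) (w / 2)).
  assert (del <= s / 4) by apply Rmin_l. assert (del <= w / 2) by apply Rmin_r.
  assert (Hdel : 0 < del) by (apply Rmin_glb_lt; lra).
  exists (s - del). split; [apply Hin; lra|].
  pose proof (Hh (s - del) ltac:(lra)) as Hhx.
  assert (ln del < K * (h (s / 2) - z)).
  { rewrite <- (ln_exp (K * (h (s / 2) - z))). apply ln_increasing; auto. fold w. lra. }
  assert (ln del / K < h (s / 2) - z).
  { apply Rmult_lt_reg_r with K; auto. unfold Rdiv. rewrite Rmult_assoc, Rinv_l by lra. lra. }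
  assert (h (s - del) = G (s - del) + ln del / K)
    by (unfold h; replace (s - (s - del)) with del by ring; reflexivity).
  lra.
Qed.

Lemma G_surjective z : exists x, D x /\ G x = z.
Proof.
  destruct (G_unbounded_below z) as [x1 [D1 G1]].
  assert (Hhigh : exists x, D x /\ z < G x).
  { destruct (classic (forall x, 0 < x -> D x)) as [All|Ex].
    - apply G_unbounded_above_xstar_infinite, All.
    - apply not_all_ex_not in Ex. destruct Ex as [x0 Hx0].
      apply imply_to_and in Hx0. destruct Hx0 as [Hx0 NDx0].
      destruct (xstar_finite x0 Hx0 NDx0) as [s [Hs [Hin Hfs]]].
      destruct (f_le_linear_left_of_root s Hs Hfs) as [K [HK Hfu]].
      apply (G_unbounded_above_xstar_finite s K); auto. }
  destruct Hhigh as [x2 [D2 G2]].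
  assert (Hx12 : x1 < x2).
  { destruct (Rlt_le_dec x1 x2) as [|Hle]; auto.
    destruct (Rle_lt_or_eq_dec _ _ Hle) as [Hl| ->]; [|lra].
    pose proof (G_increasing x2 x1 D2 D1 Hl). lra. }
  pose proof (proj1 D1).
  destruct (Ranalysis5.IVT_interv (fun x => G x - z) x1 x2) as [x [Hx1 Hx2]]; auto; try lra.
  - intros c Hc. apply continuity_pt_minus; [|apply continuity_pt_const; intros ? ?; auto].
    apply G_continuous, below_xstar_le with x2; auto. lra.
  - exists x. split; [apply below_xstar_le with x2; auto; lra | lra].
Qed.

Section Trajectory.

Variable p : R -> R.
Hypothesis p_right_continuous_0 : forall eps, 0 < eps -> exists d, 0 < d /\
  forall s, 0 <= s < d -> Rabs (p s - p 0) < eps.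
Hypothesis p_derive : forall t, 0 < t -> derivable_pt_lim p t (f (p t)).
Hypothesis p_0_below_xstar : D (p 0).

Local Notation straightened t := (D (p t) /\ G (p t) = G (p 0) + t).

Lemma p_continuous T : 0 < T -> continuity_pt p T.
Proof. intros HT. apply derivable_continuous_pt. exists (f (p T)). apply p_derive, HT. Qed.

Lemma p_right_continuous T : 0 <= T -> forall eps, 0 < eps -> exists d, 0 < d /\
  forall s, T <= s < T + d -> Rabs (p s - p T) < eps.
Proof.
  intros HT eps Heps. destruct (Rle_lt_or_eq_dec _ _ HT) as [Hp| <-].
  - destruct (proj1 (continuity_pt_iff_eps_delta _ _) (p_continuous T Hp) eps Heps)
      as [d [Hd Hs]].
    exists d; split; auto. intros s Hs'. apply Hs, Rabs_def1; lra.
  - destruct (p_right_continuous_0 eps Heps) as [d [Hd Hs]].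
    exists d; split; auto. intros s Hs'. apply Hs. lra.
Qed.

Lemma p_left_continuous T : 0 < T -> forall eps, 0 < eps -> exists d, 0 < d <= T /\
  forall s, T - d < s <= T -> Rabs (p s - p T) < eps.
Proof.
  intros HT eps Heps.
  destruct (proj1 (continuity_pt_iff_eps_delta _ _) (p_continuous T HT) eps Heps)
    as [d [Hd Hs]].
  exists (Rmin d T). pose proof (Rmin_l d T). pose proof (Rmin_r d T).
  split; [split; [apply Rmin_glb_lt|]; auto|].
  intros s Hs'. apply Hs, Rabs_def1; lra.
Qed.

(* While straightened, [p] stays between [p 0] and [G^-1 (G (p 0) + T + 1) < x^*]. *)
Lemma straightened_below_xstar T : 0 < T ->
  (forall t, 0 <= t < T -> straightened t) -> D (p T).
Proof.
  intros HT Hb.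
  destruct (G_surjective (G (p 0) + T + 1)) as [w [Dw Gw]].
  assert (Hbd : forall t, 0 <= t < T -> p 0 <= p t <= w).
  { intros t Ht. destruct (Hb t Ht) as [Dt Gt]. split.
    - destruct (Rle_lt_dec (p 0) (p t)) as [|Hl]; auto.
      pose proof (G_increasing _ _ Dt p_0_below_xstar Hl). lra.
    - destruct (Rle_lt_dec (p t) w) as [|Hl]; auto.
      pose proof (G_increasing _ _ Dw Dt Hl). lra. }
  assert (HpT : p 0 <= p T <= w).
  { split; apply Rnot_lt_le; intro Hl.
    - destruct (p_left_continuous T HT (p 0 - p T) ltac:(lra)) as [d [Hd Hs]].
      specialize (Hs (T - d / 2) ltac:(lra)). specialize (Hbd (T - d / 2) ltac:(lra)).
      apply Rabs_def2 in Hs. lra.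
    - destruct (p_left_continuous T HT (p T - w) ltac:(lra)) as [d [Hd Hs]].
      specialize (Hs (T - d / 2) ltac:(lra)). specialize (Hbd (T - d / 2) ltac:(lra)).
      apply Rabs_def2 in Hs. lra. }
  pose proof (proj1 p_0_below_xstar). apply below_xstar_le with w; auto; lra.
Qed.

Lemma straightened_closed T : 0 < T ->
  (forall t, 0 <= t < T -> straightened t) -> straightened T.
Proof.
  intros HT Hb. pose proof (straightened_below_xstar T HT Hb) as DT. split; auto.
  assert (Cq : continuity_pt (fun s => G (p s) - s) T).
  { apply continuity_pt_minus.
    - apply (continuity_pt_comp p G); [apply p_continuous, HT | apply G_continuous, DT].
    - apply derivable_continuous_pt, derivable_pt_id. }
  assert (G (p T) - (G (p 0) + T) = 0); [|lra].
  apply cond_eq. intros eps Heps.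
  destruct (proj1 (continuity_pt_iff_eps_delta _ _) Cq eps Heps) as [d [Hd Hs]].
  set (s := T - Rmin d T / 2).
  pose proof (Rmin_l d T). pose proof (Rmin_r d T).
  assert (0 < Rmin d T) by (apply Rmin_glb_lt; lra).
  specialize (Hs s ltac:(unfold s; apply Rabs_def1; lra)).
  destruct (Hb s ltac:(unfold s; lra)) as [_ Gs]. rewrite Gs in Hs.
  rewrite Rminus_0_r, <- Rabs_Ropp. replace (- _) with (G (p 0) + s - s - (G (p T) - T))
    by ring. exact Hs.
Qed.

(* Past [T], [p] stays near [p T] inside [(0, x^* )], where [G (p s) - s] has
   derivative [f (p s) / f (p s) - 1 = 0]. *)
Lemma straightened_open T : 0 <= T ->
  (forall t, 0 <= t <= T -> straightened t) ->
  exists d, 0 < d /\ forall t, T < t < T + d -> straightened t.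
Proof.
  intros HT Hb. destruct (Hb T ltac:(lra)) as [DT GT]. pose proof (proj1 DT).
  destruct (below_xstar_extend _ DT) as [e0 [He0 De0]].
  pose proof (Rmin_l e0 (p T)). pose proof (Rmin_r e0 (p T)). set (e := Rmin e0 (p T)) in *.
  assert (He : 0 < e) by (apply Rmin_glb_lt; lra).
  assert (Dnear : forall w, Rabs (w - p T) < e -> D w).
  { intros w Hw. apply Rabs_def2 in Hw. apply below_xstar_le with (p T + e0); auto. lra. }
  destruct (p_right_continuous T HT e He) as [d [Hd Hs]].
  exists d. split; auto.
  assert (Hq : forall t, T < t < T + d -> G (p t) - t = G (p T) - T).
  { apply (const_of_derive0_right_cont (fun s => G (p s) - s)); [lra| |].
    - intros eps Heps.
      destruct (proj1 (continuity_pt_iff_eps_delta _ _) (G_continuous _ DT) (eps / 2))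
        as [d1 [Hd1 Hs1]]; [lra|].
      destruct (p_right_continuous T HT d1 Hd1) as [d2 [Hd2 Hs2]].
      exists (Rmin d2 (eps / 2)). pose proof (Rmin_l d2 (eps / 2)).
      pose proof (Rmin_r d2 (eps / 2)). split; [apply Rmin_glb_lt; lra|].
      intros s Hs'. specialize (Hs1 (p s) (Hs2 s ltac:(lra))).
      apply Rabs_def2 in Hs1. apply Rabs_def1; lra.
    - intros x Hx. assert (Dx : D (p x)) by (apply Dnear, Hs; lra).
      pose proof (f_pos _ Dx).
      replace 0 with (1 / f (p x) * f (p x) - 1) by (field; lra).
      apply (derivable_pt_lim_minus (fun s => G (p s)) id).
      + apply (derivable_pt_lim_comp p G); [apply p_derive; lra | apply G_derive, Dx].
      + apply derivable_pt_lim_id. }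
  intros t Ht. split; [apply Dnear, Hs; lra|]. specialize (Hq t Ht). lra.
Qed.

Lemma G_along_trajectory t : 0 <= t -> straightened t.
Proof.
  apply (real_induction (fun t => straightened t)).
  - split; [exact p_0_below_xstar | ring].
  - exact straightened_closed.
  - exact straightened_open.
Qed.

End Trajectory.

Lemma flow_straightened (phi : R -> R -> R) : is_flow f phi ->
  forall y t, D y -> 0 <= t -> D (phi t y) /\ G (phi t y) = G y + t.
Proof.
  intros Hphi y t Dy Ht. destruct (Hphi y (Rlt_le _ _ (proj1 Dy))) as [P0 [Prc Pd]].
  replace (G y) with (G ((fun s => phi s y) 0)) by (rewrite P0; reflexivity).
  apply (G_along_trajectory (fun s => phi s y)); auto; [|rewrite P0; exact Dy].
  intros eps Heps. rewrite P0. apply Prc, Heps.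
Qed.

Lemma flow_rescaled_converges (phi : R -> R -> R) (H : R -> R) : is_flow f phi ->
  (forall x, 0 < x -> D (H x) /\ G (H x) = ln x / a) ->
  forall c d, 0 < c -> c <= d -> forall eps, 0 < eps -> exists T, forall t, T <= t ->
    forall x, c <= x <= d -> Rabs (phi t (x * exp (- a * t)) - H x) < eps.
Proof.
  intros Hphi HH c d Hc Hcd eps Heps.
  destruct (HH d ltac:(lra)) as [Dq Gq]. pose proof (proj1 Dq).
  assert (Hlog : 0 < ln (1 + eps / H d)).
  { rewrite <- ln_1. apply ln_increasing; [lra|].
    assert (0 < eps / H d) by (apply Rdiv_lt_0_compat; lra). lra. }
  destruct (J_vanishes_at_0 (ln (1 + eps / H d) / a)) as [del [Hdel Hsmall]];
    [apply Rdiv_lt_0_compat; lra|].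
  destruct (exp_decay_uniform a d del a_pos Hdel) as [T HT].
  exists (Rmax 0 T). intros t Ht x Hx.
  pose proof (Rmax_l 0 T). pose proof (Rmax_r 0 T).
  set (y := x * exp (- a * t)).
  assert (Hy : 0 < y < del) by (apply HT; lra).
  destruct (Hsmall y Hy) as [Dy Jy].
  destruct (flow_straightened phi Hphi y t Dy ltac:(lra)) as [Dp Gp].
  destruct (HH x ltac:(lra)) as [Dr Gr].
  assert (HGy : G y = J y + ln x / a - t).
  { pose proof (exp_pos (- a * t)).
    unfold G, y. rewrite ln_mult, ln_exp by lra. field. lra. }
  apply abs_sub_lt_of_ln_close with (H d); [exact (proj1 Dp) | split | exact Heps |].
  - exact (proj1 Dr).
  - apply Rnot_lt_le. intro Hl.
    pose proof (G_increasing _ _ Dq Dr Hl).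
    assert (ln x <= ln d) by (apply ln_le; lra).
    assert (ln x / a <= ln d / a) by (apply Rmult_le_compat_r; [apply Rlt_le, Rinv_0_lt_compat|]; lra).
    lra.
  - eapply Rle_lt_trans; [apply ln_dist_le_G_dist; auto|].
    replace (G (phi t y) - G (H x)) with (J y) by lra.
    apply Rmult_lt_reg_r with (/ a); [apply Rinv_0_lt_compat; lra|].
    replace (a * Rabs (J y) * / a) with (Rabs (J y)) by (field; lra). exact Jy.
Qed.

End Proposition1.

Theorem proposition1
  (f f1 f2 : R -> R) (phi : R -> R -> R)
  (Hf1 : forall x, derivable_pt_lim f x (f1 x))
  (Hf2 : forall x, derivable_pt_lim f1 x (f2 x))
  (Hf2c : continuity f2)
  (Hf2b : exists M, forall x, 0 <= x -> Rabs (f2 x) <= M)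
  (Hf0 : f 0 = 0)
  (Ha : 0 < f1 0)
  (Hmon : forall x y, 0 <= x -> 0 <= y ->
            (y - x) * (f y - f x) <= f1 0 * (y - x) ^ 2)
  (Hphi : is_flow f phi) :
  let a := f1 0 in
  exists G : R -> R,
    (forall x, below_xstar f x ->
       improper_int0 (fun u => 1 / f u - 1 / (a * u)) x (G x - ln x / a)) /\
    (forall x, below_xstar f x -> continuity_pt G x) /\
    (forall x y, below_xstar f x -> below_xstar f y -> x < y -> G x < G y) /\
    (forall z, exists x, below_xstar f x /\ G x = z) /\
    exists H : R -> R,
      (forall x, 0 < x -> below_xstar f (H x) /\ G (H x) = ln x / a) /\
      (forall c d, 0 < c -> c <= d ->
         forall eps, 0 < eps -> exists T, forall t, T <= t ->
           forall x, c <= x <= d ->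
             Rabs (phi t (x * exp (- a * t)) - H x) < eps).
Proof.
  intros a.
  assert (Hsurj : forall z, exists x, below_xstar f x /\ G f f1 f2 x = z)
    by (eapply G_surjective; eauto).
  destruct (choice _ Hsurj) as [Ginv HGinv].
  exists (G f f1 f2). split; [|split; [|split; [|split]]].
  - eapply G_improper_integral; eauto.
  - eapply G_continuous; eauto.
  - eapply G_increasing; eauto.
  - exact Hsurj.
  - exists (fun x => Ginv (ln x / a)).
    assert (HH : forall x, 0 < x -> below_xstar f (Ginv (ln x / a)) /\
                              G f f1 f2 (Ginv (ln x / a)) = ln x / a)
      by (intros x _; apply HGinv).
    split; [exact HH|]. eapply flow_rescaled_converges; eauto.
Qed.
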